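(* Consider the noiseless setting and assume in addition that $\mathbf X$ is i.i.d. Given reads $x_1^\ell(1),x_1^\ell(2)$, let $t_+$ be the largest $t\in[\ell]$ with $x_{\ell-t+1}^\ell(1)=x_1^t(2)$ ($t_+:=0$ if none), and $t_-$ the largest $t\in[\ell-1]$ with $x_{\ell-t+1}^\ell(2)=x_1^t(1)$ ($t_-:=0$ if none). Let $\Gamma_+(t):=1/P_{X_1^t}(x_1^t(2))$, $\Gamma_-(t):=1/P_{X_1^t}(x_1^t(1))$ for $t\ge1$, and $\Gamma_\pm(0):=1$. Then the rule \[ \hat T_{\mathrm{MAP}}(x_1^\ell(1),x_1^\ell(2))=\begin{cases}t_+,&\Gamma_+(t_+)\ge\max\{\Gamma_-(t_-),n_\ell\},\\ -t_-,&\Gamma_-(t_-)\ge\max\{\Gamma_+(t_+),n_\ell\},\\ 0,&\text{otherwise}\end{cases} \] is a maximum a posteriori (hence Bayes-optimal) detector of $T$.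
   Context: Setting. $\mathcal X$ finite alphabet; $\mathbf X=\{X_i\}_{i\in\mathbb Z}$ a random process on $\mathcal X$ (here i.i.d.). Fix $\beta>0$; $\ell=\beta\log n$ (integer), $n_\ell:=n-(2\ell-1)$. $I(1)\sim\mathrm{Uniform}[n]$; conditionally on $I(1)$, $I(2)$ is uniform on $I(1)+\{-\ell+1,\dots,n-\ell\}$ if $1\le I(1)\le\ell-1$, uniform on $[n]$ if $\ell\le I(1)\le n-\ell+1$, uniform on $I(1)+\{\ell-n,\dots,\ell-1\}$ if $n-\ell+2\le I(1)\le n$; independent of $\mathbf X$. Reads $X_1^\ell(j):=X_{I(j)}^{I(j)+\ell-1}$. Signed overlap $T:=\max\{0,\ell-(I(2)-I(1))\}$ if $I(2)\ge I(1)$, else $T:=-\max\{0,\ell-(I(1)-I(2))\}$; values in $\{-(\ell-1),\dots,\ell\}$ with $\mathbb P[T=0]=n_\ell/n$ and $\mathbb P[T=t]=1/n$ for $t\ne0$. Noiseless setting: reads are observed exactly. A MAP detector maps the observed reads to a maximizer over $t$ of $\mathbb P[T=t]\cdot\mathbb P[X_1^\ell(1)=x_1^\ell(1),X_1^\ell(2)=x_1^\ell(2)\mid T=t]$. *)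

From HB Require Import structures.
From mathcomp Require Import all_boot all_order all_algebra.
Unset Printing Implicit Defensive.
Import Order.TTheory GRing.Theory Num.Theory.
Local Open Scope ring_scope.

(* Support of I(2) given I(1) = i1 (positions are integers). *)
Definition I2_range (n l : nat) (i1 i2 : int) : bool :=
  if i1 <= l%:Z - 1 then (i1 - l%:Z + 1 <= i2) && (i2 <= i1 + n%:Z - l%:Z)
  else if i1 <= n%:Z - l%:Z + 1 then (1 <= i2) && (i2 <= n%:Z)
  else (i1 + l%:Z - n%:Z <= i2) && (i2 <= i1 + l%:Z - 1).

(* P[I(1) = i1, I(2) = i2] = P[I(1)=i1] * P[I(2)=i2 | I(1)=i1]
   (I(1) uniform on [n]; I(2) uniform on a set of n integers). *)
Definition PI (R : realFieldType) (n l : nat) (i1 i2 : int) : R :=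
  if (1 <= i1) && (i1 <= n%:Z) && I2_range n l i1 i2
  then (n%:R)^-1 * (n%:R)^-1 else 0.

Definition overlap (l : nat) (i1 i2 : int) : int :=
  if i1 <= i2 then Num.max 0 (l%:Z - (i2 - i1))
  else - Num.max 0 (l%:Z - (i1 - i2)).

(* Finite window of the process: index j : 'I_(win n l).+1 stands for the
   integer position j - l; it covers positions -l .. n+2l, which contains
   every symbol any read can touch (positions 2-l .. n+2l-2). *)
Definition win (n l : nat) : nat := (n + 3 * l)%N.
Definition pos (n l : nat) (j : 'I_(win n l).+1) : int := j%:Z - l%:Z.

Definition Xat {A : finType} (n l : nat) (x : {ffun 'I_(win n l).+1 -> A})
  (z : int) : A := x (inord (absz (z + l%:Z))).

Definition read {A : finType} (n l : nat) (x : {ffun 'I_(win n l).+1 -> A})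
  (i : int) : l.-tuple A := [tuple Xat n l x (i + k%:Z) | k < l].

Definition Pwin {R : realFieldType} {A : finType} (p : A -> R) (n l : nat)
  (x : {ffun 'I_(win n l).+1 -> A}) : R := \prod_j p (x j).

Definition prior (R : realFieldType) (n l : nat) (t : int) : R :=
  \sum_(j1 : 'I_(win n l).+1) \sum_(j2 : 'I_(win n l).+1)
    (if overlap l (pos n l j1) (pos n l j2) == t then PI R n l (pos n l j1) (pos n l j2) else 0).

Definition joint {R : realFieldType} {A : finType} (p : A -> R) (n l : nat)
  (t : int) (a b : l.-tuple A) : R :=
  \sum_(j1 : 'I_(win n l).+1) \sum_(j2 : 'I_(win n l).+1)
  \sum_(x : {ffun 'I_(win n l).+1 -> A})
    (if [&& overlap l (pos n l j1) (pos n l j2) == t,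
            read n l x (pos n l j1) == a & read n l x (pos n l j2) == b]
     then PI R n l (pos n l j1) (pos n l j2) * Pwin p n l x else 0).

Definition likelihood {R : realFieldType} {A : finType} (p : A -> R) (n l : nat)
  (t : int) (a b : l.-tuple A) : R := joint p n l t a b / prior R n l t.

Definition map_score {R : realFieldType} {A : finType} (p : A -> R) (n l : nat)
  (t : int) (a b : l.-tuple A) : R := prior R n l t * likelihood p n l t a b.

Definition is_MAP_detector {R : realFieldType} {A : finType} (p : A -> R)
  (n l : nat) (d : l.-tuple A -> l.-tuple A -> int) : Prop :=
  forall a b : l.-tuple A,
    (- (l%:Z - 1) <= d a b <= l%:Z) /\
    (forall t : int, - (l%:Z - 1) <= t <= l%:Z ->
       map_score p n l t a b <= map_score p n l (d a b) a b).

Definition tplus {A : finType} (l : nat) (a b : l.-tuple A) : nat :=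
  \max_(t < l.+1 | (0 < t)%N && (drop (l - t) a == take t b)) t.
Definition tminus {A : finType} (l : nat) (a b : l.-tuple A) : nat :=
  \max_(t < l | (0 < t)%N && (drop (l - t) b == take t a)) t.

Definition PX {R : realFieldType} {A : finType} (p : A -> R) (s : seq A) : R :=
  \prod_(y <- s) p y.

Definition Gamma {R : realFieldType} {A : finType} (p : A -> R) (l : nat)
  (s : l.-tuple A) (t : nat) : R :=
  if t == 0%N then 1 else (PX p (take t s))^-1.

Definition T_MAP {R : realFieldType} {A : finType} (p : A -> R) (n l : nat)
  (a b : l.-tuple A) : int :=
  let tp := tplus l a b in
  let tm := tminus l a b in
  let gp := Gamma p l b tp in
  let gm := Gamma p l a tm in
  let nl : R := (n - (2 * l - 1))%N%:R in
  if Num.max gm nl <= gp then tp%:Z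
  else if Num.max gp nl <= gm then - (tm%:Z)
  else 0.

From HB Require Import structures.
From mathcomp Require Import all_boot all_order all_algebra.
From mathcomp Require Import zify ring lra.
Import Order.TTheory GRing.Theory Num.Theory.

(* Given the read positions, the two reads are windows of one i.i.d. string.
   For an overlap t > 0 they share the t symbols [take t b], so
   P[reads | T = t] = [reads agree on the overlap] * P(a) P(b) / P(take t b),
   i.e. P(a) P(b) Gamma_+(t) when consistent; symmetrically for t < 0, and
   P[reads | T = 0] = P(a) P(b).  Since P[T = 0] = n_l / n and P[T = t] = 1 / n
   otherwise, the MAP objective is P(a) P(b) / n times n_l, Gamma_+(t) or
   Gamma_-(|t|).  Prefix probabilities decrease with the length, so Gamma is
   nondecreasing and the best consistent positive and negative overlaps are
   t_+ and -t_-; the rule picks the largest of the three candidates. *)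

Lemma big_nat_window {R : Type} {idx : R} (op : Monoid.law idx) (N lo hi : nat)
    (F : nat -> R) : hi <= N ->
  \big[op/idx]_(0 <= u < N) (if (lo <= u) && (u < hi) then F u else idx) =
  \big[op/idx]_(lo <= u < hi) F u.
Proof.
move=> hiN; rewrite (big_nat_widen _ _ _ _ _ hiN) (big_nat_widenl _ _ _ _ _ (leq0n lo)).
by rewrite [RHS]big_mkcond; apply: eq_bigr => u _; rewrite andbC.
Qed.

Lemma big_nat_window_offset {R : Type} {idx : R} (op : Monoid.law idx) (N lo k : nat)
    (F : nat -> R) : lo + k <= N ->
  \big[op/idx]_(0 <= u < N) (if (lo <= u) && (u < lo + k) then F u else idx) =
  \big[op/idx]_(0 <= i < k) F (lo + i).
Proof.
move=> hN; rewrite big_nat_window // -{1}[lo]add0n big_addn addKn.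
by apply: eq_bigr => i _; rewrite addnC.
Qed.

Lemma sum_nat_window (N lo hi : nat) : hi <= N ->
  \sum_(0 <= u < N) ((lo <= u) && (u < hi) : nat) = hi - lo.
Proof.
move=> hiN; rewrite -[RHS]muln1 -sum_nat_const_nat -(big_nat_window _ _ lo _ _ hiN).
by apply: eq_bigr => u _; case: ifP.
Qed.

Local Open Scope ring_scope.

Lemma prodr_if0 (R : comNzRingType) (I : finType) (P : pred I) (f : I -> R) :
  \prod_i (if P i then f i else 0) = if [forall i, P i] then \prod_i f i else 0.
Proof.
case: (boolP [forall i, P i]) => [/forallP HP | /forallPn[i nPi]].
  by apply: eq_bigr => i _; rewrite HP.
by rewrite (bigD1 i) //= (negbTE nPi) mul0r.
Qed.

Lemma prodr_eq_nth (R : comNzRingType) (T : eqType) (x0 : T) (s1 s2 : seq T) (k : nat) :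
  size s1 = k -> size s2 = k ->
  \prod_(0 <= i < k) ((nth x0 s1 i == nth x0 s2 i)%:R : R) = (s1 == s2)%:R.
Proof.
move=> h1 h2; case: eqVneq => [<- | ne12]; first by rewrite big1 // => i _; rewrite eqxx.
have [i ne_i] : exists i : 'I_k, nth x0 s1 i != nth x0 s2 i.
  apply/existsP; apply: contra_neqT ne12 => /existsPn eq_nth.
  apply: (eq_from_nth (x0 := x0)) => [|i]; first by rewrite h1 h2.
  by rewrite h1 => ltik; apply/eqP/negPn/(eq_nth (Ordinal ltik)).
by rewrite big_mkord (bigD1 i) //= (negbTE ne_i) mul0r.
Qed.

Lemma eq_read_window (A : finType) (n l : nat) (x : {ffun 'I_(win n l).+1 -> A})
    (u : nat) (s : l.-tuple A) (x0 : A) : (u + l <= (win n l).+1)%N ->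
  (read n l x (u%:Z - l%:Z) == s) =
  [forall j : 'I_(win n l).+1, (u <= j < u + l)%N ==> (x j == nth x0 s (j - u))].
Proof.
move=> hu; rewrite eqEtuple.
have read_k (k : 'I_l) : tnth (read n l x (u%:Z - l%:Z)) k = x (inord (u + k)).
  by rewrite /read tnth_mktuple /Xat; congr (x (inord _)); lia.
apply/forallP/forallP => H j.
  apply/implyP => /andP[h1 h2]; have hk : (j - u < l)%N by lia.
  have := H (Ordinal hk); rewrite read_k (tnth_nth x0) /=.
  by have -> : inord (u + (j - u)) = j by apply: val_inj; rewrite /= inordK; lia.
have hj : (u + j < (win n l).+1)%N by case: j => /= j hj; lia.
have := H (inord (u + j)); rewrite read_k (tnth_nth x0) inordK //.
by rewrite addKn leq_addr ltn_add2l ltn_ord.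
Qed.

Lemma sum_pinned_coordinate (R : comNzRingType) (A : finType) (p : A -> R)
    (hp1 : \sum_y p y = 1) (c1 c2 : bool) (g1 g2 : A) :
  \sum_y (if (c1 ==> (y == g1)) && (c2 ==> (y == g2)) then p y else 0) =
  (if c1 then p g1 else 1) * (if c2 && ~~ c1 then p g2 else 1) *
  (if c1 && c2 then (g1 == g2)%:R else 1).
Proof.
have sum_pick (g : A) : \sum_y (if y == g then p y else 0) = p g.
  by rewrite -big_mkcond big_pred1_eq.
case: c1; case: c2 => /=; rewrite ?mulr1 ?mul1r ?sum_pick //.
- case: (eqVneq g1 g2) => [<- | ne12].
    by rewrite mulr1 -[RHS]sum_pick; apply: eq_bigr => y _; rewrite andbb.
  rewrite mulr0 big1 // => y _; case: (eqVneq y g1) => [-> | //].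
  by rewrite (negbTE ne12).
- by rewrite -[RHS]sum_pick; apply: eq_bigr => y _; rewrite andbT.
Qed.

Lemma sum_Pwin_cylinder {R : realFieldType} {A : finType} (p : A -> R) (n l : nat)
    (C : 'I_(win n l).+1 -> pred A) :
  \sum_(x : {ffun 'I_(win n l).+1 -> A})
     (if [forall j, C j (x j)] then Pwin p n l x else 0) =
  \prod_j \sum_y (if C j y then p y else 0).
Proof. by rewrite bigA_distr_bigA; apply: eq_bigr => x _; rewrite prodr_if0. Qed.

Lemma sum_Pwin_reads (R : realFieldType) (A : finType) (p : A -> R)
    (hp1 : \sum_y p y = 1) (n l : nat) (a b : l.-tuple A) (x0 : A) (u1 u2 : nat) :
    (u1 <= u2)%N -> (u2 + l <= (win n l).+1)%N ->
  \sum_(x : {ffun 'I_(win n l).+1 -> A})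
     (if (read n l x (u1%:Z - l%:Z) == a) && (read n l x (u2%:Z - l%:Z) == b)
      then Pwin p n l x else 0) =
  (drop (u2 - u1) a == take (l - (u2 - u1)) b)%:R *
  (PX p a * PX p (drop (l - (u2 - u1)) b)).
Proof.
move=> le12 hu2; set N := (win n l).+1; set d := (u2 - u1)%N; set t := (l - d)%N.
pose in1 (j : nat) := (u1 <= j < u1 + l)%N.
pose in2 (j : nat) := (u2 <= j < u2 + l)%N.
pose g1 (j : nat) := nth x0 a (j - u1).
pose g2 (j : nat) := nth x0 b (j - u2).
have cylinder (x : {ffun 'I_N -> A}) :
    (read n l x (u1%:Z - l%:Z) == a) && (read n l x (u2%:Z - l%:Z) == b) =
    [forall j : 'I_N, (in1 j ==> (x j == g1 j)) && (in2 j ==> (x j == g2 j))].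
  rewrite (eq_read_window _ _ _ x u1 a x0) ?(eq_read_window _ _ _ x u2 b x0) //; last by lia.
  apply/andP/forallP => [[/forallP H1 /forallP H2] j | H]; first by rewrite H1 H2.
  by split; apply/forallP => j; case/andP: (H j).
under eq_bigr do rewrite cylinder.
rewrite (sum_Pwin_cylinder p n l (fun j y => (in1 j ==> (y == g1 j)) && (in2 j ==> (y == g2 j)))).
under eq_bigr do rewrite sum_pinned_coordinate //.
rewrite -(big_mkord xpredT (fun i => (if in1 i then p (g1 i) else 1) *
  (if in2 i && ~~ in1 i then p (g2 i) else 1) *
  (if in1 i && in2 i then ((g1 i == g2 i)%:R : R) else 1))) !big_split /=.
have PX_a : \prod_(0 <= i < N) (if in1 i then p (g1 i) else 1) = PX p a.
  rewrite big_nat_window_offset; last by lia.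
  rewrite /PX (big_nth x0) size_tuple; apply: eq_bigr => i _.
  by rewrite /g1 addKn.
have PX_b : \prod_(0 <= i < N) (if in2 i && ~~ in1 i then p (g2 i) else 1) =
            PX p (drop t b).
  rewrite (eq_bigr (fun i => if (u2 + t <= i < u2 + t + (l - t))%N
                             then p (g2 i) else 1)); last first.
    by move=> i _; rewrite /in1 /in2 /t /d; congr (if _ then _ else _); lia.
  rewrite big_nat_window_offset; last by lia.
  rewrite /PX (big_nth x0) size_drop size_tuple; apply: eq_bigr => i _.
  by rewrite /g2 nth_drop; congr (p (nth _ _ _)); lia.
have overlap_match :
    \prod_(0 <= i < N) (if in1 i && in2 i then ((g1 i == g2 i)%:R : R) else 1) =
    (drop d a == take t b)%:R.
  rewrite (eq_bigr (fun i => if (u2 <= i < u2 + t)%N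
                             then ((g1 i == g2 i)%:R : R) else 1)); last first.
    by move=> i _; rewrite /in1 /in2 /t /d; congr (if _ then _ else _); lia.
  rewrite big_nat_window_offset; last by rewrite /t /d; lia.
  rewrite -(prodr_eq_nth _ _ x0 (drop d a) (take t b) t); first last.
  - by rewrite size_takel // size_tuple /t leq_subr.
  - by rewrite size_drop size_tuple.
  apply: eq_big_nat => i hi; rewrite /g1 /g2 nth_drop nth_take //.
  by congr ((nth _ _ _ == nth _ _ _)%:R); lia.
by rewrite PX_a PX_b overlap_match mulrC mulrA.
Qed.

Definition read_pair_prob (R : realFieldType) (A : finType) (p : A -> R) (l : nat)
    (a b : l.-tuple A) (t : int) : R :=
  if 0 <= t
  then (drop (l - `|t|) a == take `|t| b)%:R * (PX p a * PX p (drop `|t| b))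
  else (drop (l - `|t|) b == take `|t| a)%:R * (PX p b * PX p (drop `|t| a)).
Arguments read_pair_prob {R A} p {l} a b t.

Lemma drop_subKn (A : Type) (l d : nat) (s : seq A) : size s = l ->
  drop (l - (l - d)) s = drop d s.
Proof.
move=> hs; case: (leqP d l) => h; first by rewrite subKn.
by rewrite !drop_oversize // hs; lia.
Qed.

Lemma PI_neq0_bounds (R : realFieldType) (n l : nat) (j1 j2 : 'I_(win n l).+1) :
  PI R n l (pos n l j1) (pos n l j2) != 0 ->
  [/\ (l.+1 <= j1 <= l + n)%N, (j1 + l <= (win n l).+1)%N & (j2 + l <= (win n l).+1)%N].
Proof.
rewrite /PI /pos /win /I2_range; case: ifP => [/andP[/andP[h1 h2]] | _]; last by rewrite eqxx.
by case: ifP => c1; [|case: ifP => c2]; move=> /andP[h3 h4] _; split; lia.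
Qed.

Lemma sum_Pwin_reads_overlap (R : realFieldType) (A : finType) (p : A -> R)
    (hp1 : \sum_y p y = 1) (n l : nat) (a b : l.-tuple A) (x0 : A)
    (j1 j2 : 'I_(win n l).+1) :
  PI R n l (pos n l j1) (pos n l j2) != 0 ->
  \sum_(x : {ffun 'I_(win n l).+1 -> A})
     (if (read n l x (pos n l j1) == a) && (read n l x (pos n l j2) == b)
      then Pwin p n l x else 0) =
  read_pair_prob p a b (overlap l (pos n l j1) (pos n l j2)).
Proof.
move=> /PI_neq0_bounds[hj1 hj1l hj2l]; rewrite /pos.
case: (leqP j1 j2) => h12.
  rewrite (sum_Pwin_reads _ _ _ hp1 _ _ _ _ x0) //.
  have -> : overlap l (j1%:Z - l%:Z) (j2%:Z - l%:Z) = (l - (j2 - j1))%N%:Z.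
    by rewrite /overlap; case: ifP; lia.
  by rewrite /read_pair_prob /= drop_subKn // size_tuple.
under eq_bigr do rewrite andbC.
rewrite (sum_Pwin_reads _ _ _ hp1 _ _ _ _ x0) ?(ltnW h12) //.
have -> : overlap l (j1%:Z - l%:Z) (j2%:Z - l%:Z) = - (l - (j1 - j2))%N%:Z.
  by rewrite /overlap; case: ifP; lia.
rewrite /read_pair_prob abszN /=; case: (posnP (l - (j1 - j2))%N) => [hz | hpos].
  rewrite hz oppr0 lexx subn0 !drop0 !take0 [drop l a]drop_oversize ?size_tuple //.
  rewrite drop_oversize ?size_tuple; last by lia.
  by rewrite eqxx !mul1r mulrC.
rewrite ifF; last by lia.
by rewrite drop_subKn // size_tuple.
Qed.

Definition supp_overlap (n l : nat) (t : int) (u1 u2 : nat) : bool :=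
  (overlap l (u1%:Z - l%:Z) (u2%:Z - l%:Z) == t) &&
  ((1 <= u1%:Z - l%:Z) && (u1%:Z - l%:Z <= n%:Z) &&
   I2_range n l (u1%:Z - l%:Z) (u2%:Z - l%:Z)).

Lemma sum_supp_overlap_row (n l : nat) (t : int) (u1 : nat) :
    (1 <= l)%N -> (2 * l <= n)%N -> - (l%:Z - 1) <= t <= l%:Z ->
    (l.+1 <= u1 <= l + n)%N ->
  (\sum_(0 <= u2 < (win n l).+1) supp_overlap n l t u1 u2 =
   if t == 0 then n - (2 * l - 1) else 1)%N.
Proof.
move=> hl hn ht hu1; case: (eqVneq t 0) => [t0 | tn0].
  pose L := if (u1 <= 2 * l - 1)%N then (u1 + 1 - l)%N
            else if (u1 <= n + 1)%N then l.+1 else (u1 + l - n)%N.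
  rewrite (eq_bigr (fun u2 => (L <= u2 < u1 + 1 - l) + (u1 + l <= u2 < L + n)))%N.
    by rewrite big_split /= !sum_nat_window /win /L; repeat case: ifP => ?; lia.
  by move=> u2 _; rewrite /supp_overlap t0 /overlap /I2_range /L; repeat case: ifP => ?; lia.
pose v := if 0 < t then (u1 + l - `|t|)%N else (u1 - l + `|t|)%N.
rewrite (eq_bigr (fun u2 => (v <= u2 < v.+1 : nat)))%N.
  by rewrite sum_nat_window /win /v; repeat case: ifP => ?; lia.
by move=> u2 _; rewrite /supp_overlap /overlap /I2_range /v; repeat case: ifP => ?; lia.
Qed.

Lemma priorE (R : realFieldType) (n l : nat) (t : int) :
    (1 <= l)%N -> (2 * l <= n)%N -> - (l%:Z - 1) <= t <= l%:Z ->
  prior R n l t = (if t == 0 then (n - (2 * l - 1))%N else 1%N)%:R / n%:R.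
Proof.
move=> hl hn ht; set k := (if t == 0 then _ else _).
have PI_supp (j1 j2 : 'I_(win n l).+1) :
    (if overlap l (pos n l j1) (pos n l j2) == t
     then PI R n l (pos n l j1) (pos n l j2) else 0) =
    (n%:R^-1 * n%:R^-1) * (supp_overlap n l t j1 j2 : nat)%:R.
  rewrite /PI /supp_overlap /pos.
  by case: (_ == t); case: (_ && _ && _) => /=; rewrite ?mulr0 ?mulr1.
rewrite /prior; under eq_bigr do under eq_bigr do rewrite PI_supp.
under eq_bigr do rewrite -mulr_sumr -natr_sum.
rewrite -mulr_sumr -natr_sum.
have -> : (\sum_(j1 : 'I_(win n l).+1) \sum_(j2 : 'I_(win n l).+1) supp_overlap n l t j1 j2 =
           \sum_(0 <= u1 < (win n l).+1) \sum_(0 <= u2 < (win n l).+1)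
              supp_overlap n l t u1 u2)%N.
  by rewrite big_mkord; apply: eq_bigr => j1 _; rewrite big_mkord.
rewrite (eq_bigr (fun u1 => ((l.+1 <= u1 < l + n + 1) : nat) * k)%N); last first.
  move=> u1 _; case: (boolP (l.+1 <= u1 < l + n + 1)%N) => hu1.
    by rewrite mul1n sum_supp_overlap_row //; lia.
  rewrite mul0n big1 // => u2 _.
  by rewrite /supp_overlap [X in _ && X](_ : _ = false) ?andbF //; lia.
rewrite -big_distrl /= sum_nat_window; last by rewrite /win; lia.
have -> : (l + n + 1 - l.+1)%N = n by lia.
have n_neq0 : n%:R != 0 :> R by rewrite pnatr_eq0; lia.
by rewrite natrM; field.
Qed.

Lemma jointE (R : realFieldType) (A : finType) (p : A -> R) (hp1 : \sum_y p y = 1)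
    (n l : nat) (a b : l.-tuple A) (x0 : A) (t : int) :
  joint p n l t a b = read_pair_prob p a b t * prior R n l t.
Proof.
rewrite /joint /prior mulr_sumr; apply: eq_bigr => j1 _.
rewrite mulr_sumr; apply: eq_bigr => j2 _.
case: eqP => [ov_t | _] /=; last by rewrite mulr0 big1.
rewrite (eq_bigr (fun x => PI R n l (pos n l j1) (pos n l j2) *
   (if (read n l x (pos n l j1) == a) && (read n l x (pos n l j2) == b)
    then Pwin p n l x else 0))); last by move=> x _; case: ifP; rewrite ?mulr0.
rewrite -mulr_sumr; have [-> | PI_neq0] := eqVneq (PI R n l (pos n l j1) (pos n l j2)) 0.
  by rewrite !mul0r mulr0.
by rewrite (sum_Pwin_reads_overlap _ _ _ hp1 _ _ _ _ x0) // ov_t mulrC.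
Qed.

Section PX.
Context {R : realFieldType} {A : finType} (p : A -> R).
Hypotheses (hp0 : forall y, 0 <= p y) (hp1 : \sum_y p y = 1).

Lemma PX_take_drop (k : nat) (s : seq A) :
  PX p s = PX p (take k s) * PX p (drop k s).
Proof. by rewrite /PX -big_cat cat_take_drop. Qed.

Lemma PX_ge0 (s : seq A) : 0 <= PX p s.
Proof. exact: prodr_ge0. Qed.

Lemma PX_le1 (s : seq A) : PX p s <= 1.
Proof.
apply: prodr_ile1 => y _; rewrite hp0 -hp1 (bigD1 y) //= lerDl.
exact: sumr_ge0.
Qed.

Lemma PX_prefix_gt0 (s : seq A) (k : nat) : 0 < PX p s -> 0 < PX p (take k s).
Proof.
move=> PXs_gt0; rewrite lt_def PX_ge0 andbT.
by apply: contraTneq PXs_gt0 => PX0; rewrite (PX_take_drop k) PX0 mul0r ltxx.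
Qed.

Lemma Gamma_le (l : nat) (y : l.-tuple A) (s s' : nat) : 0 < PX p y ->
  (0 < s)%N -> (s <= s')%N -> Gamma p l y s <= Gamma p l y s'.
Proof.
move=> PXy_gt0 s_gt0 le_ss'; rewrite /Gamma !ifF; try by apply/eqP; lia.
have x_gt0 : 0 < PX p (take s y) by apply: PX_prefix_gt0.
have PX_s' : 0 < PX p (take s' y) by apply: PX_prefix_gt0.
rewrite (PX_take_drop s (take s' y)) take_takel // in PX_s' *.
have r_gt0 : 0 < PX p (drop s (take s' y)) by move: PX_s'; rewrite pmulr_rgt0.
by rewrite invfM ler_peMr ?invr_ge0 ?(ltW x_gt0) // invf_ge1 // PX_le1.
Qed.

(* If [PX p (take s y) = 0] its inverse is junk, but then the consistent [x]
   ends with [take s y], so [PX p x = 0] and both sides vanish. *)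
Lemma PX_overlap_split (l s : nat) (x y : l.-tuple A) :
  (drop (l - s) x == take s y)%:R * (PX p x * PX p (drop s y)) =
  PX p x * PX p y * ((drop (l - s) x == take s y)%:R * (PX p (take s y))^-1).
Proof.
case: eqP => [x_y | _]; last by rewrite !mul0r mulr0.
rewrite !mul1r (PX_take_drop s y).
have [PX0 | PX_neq0] := eqVneq (PX p (take s y)) 0; last by field.
by rewrite (PX_take_drop (l - s) x) x_y PX0 !(mulr0, mul0r).
Qed.

End PX.

Section LargestIndex.
Variables (m : nat) (P : pred nat).

Lemma bigmax_ord_cond_le : (\max_(t < m | P t) t <= m.-1)%N.
Proof. by apply/bigmax_leqP => i _; move: (ltn_ord i); lia. Qed.

Lemma bigmax_ord_cond_gt0P : (0 < \max_(t < m | P t) t)%N -> P (\max_(t < m | P t) t).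
Proof.
case: (pickP (fun t : 'I_m => P t)) => [i Pi | noP]; last by rewrite big_pred0.
have [j Pj ->] : {j | j \in [pred t : 'I_m | P t] & (\max_(t < m | P t) t)%N = j}.
  by apply: eq_bigmax_cond; apply/card_gt0P; exists i.
by [].
Qed.

Lemma leq_bigmax_ord_cond (s : nat) : (s < m)%N -> P s -> (s <= \max_(t < m | P t) t)%N.
Proof. by move=> ltsm Ps; apply: (@leq_bigmax_cond _ _ _ (Ordinal ltsm)). Qed.

End LargestIndex.

Section Overlaps.
Variables (A : finType) (l : nat) (a b : l.-tuple A).
Let plus_overlap (t : nat) := (0 < t)%N && (drop (l - t) a == take t b).
Let minus_overlap (t : nat) := (0 < t)%N && (drop (l - t) b == take t a).

Lemma tplus_le : (tplus l a b <= l)%N.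
Proof. exact: (bigmax_ord_cond_le _ plus_overlap). Qed.

Lemma tplus_match : (0 < tplus l a b)%N ->
  drop (l - tplus l a b) a == take (tplus l a b) b.
Proof. by move/(bigmax_ord_cond_gt0P _ plus_overlap)/andP => []. Qed.

Lemma tplus_max (s : nat) : (0 < s <= l)%N -> drop (l - s) a == take s b ->
  (s <= tplus l a b)%N.
Proof.
case/andP=> s_gt0 s_le match_s.
by apply: (leq_bigmax_ord_cond _ plus_overlap); rewrite /plus_overlap ?s_gt0.
Qed.

Lemma tminus_le : (tminus l a b <= l - 1)%N.
Proof. by rewrite subn1; exact: (bigmax_ord_cond_le _ minus_overlap). Qed.

Lemma tminus_match : (0 < tminus l a b)%N ->
  drop (l - tminus l a b) b == take (tminus l a b) a.
Proof. by move/(bigmax_ord_cond_gt0P _ minus_overlap)/andP => []. Qed.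

Lemma tminus_max (s : nat) : (0 < s < l)%N -> drop (l - s) b == take s a ->
  (s <= tminus l a b)%N.
Proof.
case/andP=> s_gt0 s_lt match_s.
by apply: (leq_bigmax_ord_cond _ minus_overlap); rewrite /minus_overlap ?s_gt0.
Qed.

End Overlaps.

(* MAP objective up to the factor P(a) P(b) / n common to all candidates t. *)
Definition map_weight {R : realFieldType} {A : finType} (p : A -> R) (n l : nat)
    (a b : l.-tuple A) (t : int) : R :=
  if t == 0 then (n - (2 * l - 1))%N%:R
  else if 0 < t then (drop (l - `|t|) a == take `|t| b)%:R * Gamma p l b `|t|
  else (drop (l - `|t|) b == take `|t| a)%:R * Gamma p l a `|t|.

Lemma map_score_weight (R : realFieldType) (A : finType) (p : A -> R)
    (hp1 : \sum_y p y = 1) (n l : nat) (a b : l.-tuple A) (t : int) :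
    (1 <= l)%N -> (2 * l <= n)%N -> - (l%:Z - 1) <= t <= l%:Z ->
  map_score p n l t a b = PX p a * PX p b * map_weight p n l a b t / n%:R.
Proof.
move=> hl hn ht; have x0 := tnth a (Ordinal hl).
have prior_neq0 : prior R n l t != 0.
  by rewrite priorE // mulf_neq0 ?invr_eq0 // pnatr_eq0; [case: ifP|]; lia.
rewrite /map_score /likelihood (jointE _ _ _ hp1 _ _ _ _ x0) mulrCA divff // mulr1.
rewrite priorE // [LHS]mulrA; congr (_ * _); rewrite /read_pair_prob /map_weight.
have [-> | t_neq0] := eqVneq t 0.
  by rewrite /= subn0 drop_oversize ?size_tuple //= take0 drop0 mul1r.
rewrite mulr1; case: ifP => [t_ge0 | t_lt0].
  rewrite ifT; last by rewrite lt_def t_neq0.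
  by rewrite PX_overlap_split /Gamma ifF //; apply/eqP; lia.
rewrite ifF; last by rewrite ltNge ltW // ltNge t_lt0.
by rewrite PX_overlap_split /Gamma ifF 1?(mulrC (PX p b)) //; apply/eqP; lia.
Qed.

Section MAPDetector.
Context {R : realFieldType} {A : finType} (p : A -> R) (n l : nat).
Hypotheses (hp0 : forall y, 0 <= p y) (hp1 : \sum_y p y = 1).
Variables (a b : l.-tuple A).

Let tp := tplus l a b.
Let tm := tminus l a b.
Let n_l : R := (n - (2 * l - 1))%N%:R.
Let best : R := Num.max (Gamma p l b tp) (Num.max (Gamma p l a tm) n_l).

Lemma T_MAP_range : (1 <= l)%N -> - (l%:Z - 1) <= T_MAP p n l a b <= l%:Z.
Proof.
move=> hl; have := tplus_le _ _ a b; have := tminus_le _ _ a b.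
by rewrite /T_MAP; case: ifP => _; [|case: ifP => _]; lia.
Qed.

Lemma map_weight_le_best (t : int) : 0 < PX p a -> 0 < PX p b ->
  - (l%:Z - 1) <= t <= l%:Z -> map_weight p n l a b t <= best.
Proof.
move=> PXa_gt0 PXb_gt0 ht; rewrite /map_weight /best.
case: eqP => [_ | t_neq0]; first by rewrite !le_max lexx !orbT.
case: ifP => t_gt0; case: eqP => [match_t | _]; rewrite ?mul0r ?mul1r;
  try by rewrite !le_max ler0n !orbT.
- have le_t : (`|t| <= tp)%N by apply: tplus_max; [lia | apply/eqP].
  by rewrite le_max Gamma_le //; lia.
- have le_t : (`|t| <= tm)%N by apply: tminus_max; [lia | apply/eqP].
  by rewrite !le_max Gamma_le ?orbT //; lia.
Qed.

Lemma best_le_map_weight_T_MAP : (1 <= l)%N -> (2 * l <= n)%N ->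
  best <= map_weight p n l a b (T_MAP p n l a b).
Proof.
move=> hl hn; have n_l_ge1 : 1 <= n_l by rewrite ler1n; lia.
rewrite /best /T_MAP -/tp -/tm -/n_l.
case: ifP => [plus_best | not_plus].
  rewrite /map_weight -/n_l; move: plus_best; rewrite ge_max => /andP[gm_le gp_ge_nl].
  have [tp0 | tp_gt0] := posnP tp.
    rewrite tp0 eqxx [Gamma _ _ _ 0]/Gamma eqxx in gm_le gp_ge_nl *.
    by rewrite !ge_max lexx n_l_ge1 (le_trans gm_le n_l_ge1).
  rewrite ifF ?ifT ?absz_nat ?tplus_match ?mul1r ?ge_max ?lexx ?gm_le ?gp_ge_nl //; lia.
case: ifP => [minus_best | not_minus].
  rewrite /map_weight -/n_l; move: minus_best; rewrite ge_max => /andP[gp_le gm_ge_nl].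
  have [tm0 | tm_gt0] := posnP tm.
    rewrite tm0 oppr0 eqxx [Gamma _ _ _ 0]/Gamma eqxx in gp_le gm_ge_nl *.
    by rewrite !ge_max lexx n_l_ge1 (le_trans gp_le n_l_ge1).
  rewrite ifF ?ifF ?abszN ?absz_nat ?tminus_match ?mul1r ?ge_max ?lexx ?gp_le ?gm_ge_nl //; lia.
move: not_plus not_minus; rewrite /map_weight -/n_l eqxx !ge_max lexx andbT.
set gp := Gamma p l b tp; set gm := Gamma p l a tm.
by case: (leP gm gp); case: (leP n_l gp); case: (leP gp gm); case: (leP n_l gm) => //=; lra.
Qed.

End MAPDetector.

Theorem mainTheorem6 (R : realFieldType) (A : finType) (p : A -> R) (n l : nat)
  (hp0 : forall y : A, 0 <= p y) (hp1 : \sum_(y : A) p y = 1)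
  (hl : (1 <= l)%N) (hn : (2 * l <= n)%N) :
  is_MAP_detector p n l (T_MAP p n l).
Proof.
move=> a b; have T_range := T_MAP_range p n l a b hl; split => // t ht.
rewrite !map_score_weight //; apply: ler_wpM2r; first by rewrite invr_ge0 ler0n.
have [PXa0 | PXa_neq0] := eqVneq (PX p a) 0; first by rewrite PXa0 !mul0r.
have [PXb0 | PXb_neq0] := eqVneq (PX p b) 0; first by rewrite PXb0 mulr0 !mul0r.
have PXa_gt0 : 0 < PX p a by rewrite lt_def PXa_neq0 PX_ge0.
have PXb_gt0 : 0 < PX p b by rewrite lt_def PXb_neq0 PX_ge0.
apply: ler_wpM2l; first by rewrite mulr_ge0 ?ltW.
apply: le_trans (best_le_map_weight_T_MAP p n l a b hl hn).
exact: map_weight_le_best.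
Qed.
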